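(* For any non-trivial non-empty graphs $G$ and $H$, $$\alpha(G\times H)\ge \mu(H)\,\alpha(G\times K_2)=\mu(H)\,\mu(G\times K_2)\ge 2\,\mu(G)\,\mu(H).$$
   Context: Graphs are finite, simple, undirected; non-trivial means at least two vertices and non-empty means at least one edge. $\alpha(F)$ is the vertex cover number (minimum size of a vertex set meeting every edge) and $\mu(F)$ the matching number (maximum size of a matching) of $F$. $K_2$ is the complete graph on two vertices. The direct product $G\times H$ has vertex set $V(G)\times V(H)$, with $(a,b)$ adjacent to $(c,d)$ iff $ac\in E(G)$ and $bd\in E(H)$. *)

From mathcomp Require Import all_boot.
Set Implicit Arguments. Unset Strict Implicit. Unset Printing Implicit Defensive.

Definition simple_graph (T : finType) (e : rel T) : Prop :=
  symmetric e /\ irreflexive e.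

Definition nontrivial_graph (T : finType) : Prop := 1 < #|T|.
Definition nonempty_graph (T : finType) (e : rel T) : Prop := exists x y, e x y.

(* vertex covers and vertex cover number alpha(F) = min size of a cover
   (the full vertex set is always a cover, so #|T| is an upper bound) *)
Definition is_vertex_cover (T : finType) (e : rel T) (S : {set T}) : bool :=
  [forall x, forall y, e x y ==> (x \in S) || (y \in S)].

Definition vertex_cover_number (T : finType) (e : rel T) : nat :=
  \big[minn/#|T|]_(S : {set T} | is_vertex_cover e S) #|S|.

Definition is_edge (T : finType) (e : rel T) (f : {set T}) : bool :=
  [exists x, exists y, e x y && (f == [set x; y])].

Definition is_matching (T : finType) (e : rel T) (M : {set {set T}}) : bool :=
  [forall f in M, is_edge e f] &&
  [forall f in M, forall g in M, (f != g) ==> [disjoint f & g]].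

Definition matching_number (T : finType) (e : rel T) : nat :=
  \max_(M : {set {set T}} | is_matching e M) #|M|.

Definition direct_prod (T U : finType) (eG : rel T) (eH : rel U) : rel (T * U) :=
  fun p q => eG p.1 q.1 && eH p.2 q.2.

Definition K2 : rel bool := fun a b => a != b.

From mathcomp Require Import all_boot zify.
Set Implicit Arguments. Unset Strict Implicit. Unset Printing Implicit Defensive.

(* If S covers G x H and ab is an edge of a maximum matching of H, identifying
   the fibres over a and b with the two sides of K2 turns the part of S lying
   over {a, b} into a cover of G x K2; these parts are disjoint, whence the
   first inequality.  G x K2 is the bipartite double cover of G, so Koenig's
   theorem (derived here from Hall's) gives alpha(G x K2) = mu(G x K2).  Finally
   each edge xy of a matching of G yields the two disjoint edges
   (x,0)(y,1) and (y,0)(x,1) of G x K2. *)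

Lemma card_bigcup_disjoint (I T : finType) (P : {pred I}) (F : I -> {set T}) :
  {in P &, forall i j, i != j -> [disjoint F i & F j]} ->
  #|\bigcup_(i in P) F i| = \sum_(i in P) #|F i|.
Proof.
move=> disjF; pose G i := if i \in P then F i else set0.
rewrite big_mkcond -/(\bigcup_i G i) -sum1_card partition_disjoint_bigcup.
  rewrite [RHS]big_mkcond; apply: eq_bigr => i _.
  by rewrite sum1_card /G; case: ifP; rewrite ?cards0.
move=> i j nij; rewrite -setI_eq0 /G.
by case: ifP => iP; case: ifP => jP; rewrite ?set0I ?setI0 // setI_eq0 disjF.
Qed.

Lemma cardsU_disjoint (T : finType) (A B : {set T}) :
  [disjoint A & B] -> #|A :|: B| = #|A| + #|B|.
Proof. by move=> disjAB; rewrite cardsU (disjoint_setI0 disjAB) cards0 subn0. Qed.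

Section CoversAndMatchings.
Variables (T : finType) (e : rel T).

Lemma is_vertex_coverP (S : {set T}) :
  reflect (forall x y, e x y -> (x \in S) || (y \in S)) (is_vertex_cover e S).
Proof.
apply: (iffP forallP) => [coverS x y exy | coverS x].
  by move/forallP/(_ y): (coverS x); rewrite exy.
by apply/forallP => y; apply/implyP; apply: coverS.
Qed.

Lemma is_edgeP (f : {set T}) :
  reflect (exists x y, e x y /\ f = [set x; y]) (is_edge e f).
Proof.
apply: (iffP existsP) => [[x /existsP[y /andP[exy /eqP ->]]] | [x [y [exy ->]]]].
  by exists x, y.
by exists x; apply/existsP; exists y; rewrite exy eqxx.
Qed.

Lemma is_matchingP (M : {set {set T}}) :
  reflect ({in M, forall f, is_edge e f} /\
           {in M &, forall f g : {set T}, f != g -> [disjoint f & g]})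
          (is_matching e M).
Proof.
apply: (iffP andP) => [[/forall_inP edgeM /forall_inP disjM] | [edgeM disjM]].
  split=> // f g fM gM; exact/implyP/(forall_inP (disjM f fM)).
split; apply/forall_inP => // f fM; apply/forall_inP => g gM; apply/implyP.
exact: disjM.
Qed.

Lemma vertex_cover_number_min (S : {set T}) :
  is_vertex_cover e S -> vertex_cover_number e <= #|S|.
Proof.
move=> coverS; rewrite /vertex_cover_number.
have: S \in index_enum {set T} by rewrite mem_index_enum.
elim: (index_enum _) => [//|S' r IH]; rewrite inE big_cons => /predU1P[<- | Sr].
  by rewrite coverS geq_minl.
by case: ifP => _; [rewrite geq_min IH ?orbT | exact: IH].
Qed.

Lemma vertex_cover_number_attained :
  exists2 S, is_vertex_cover e S & #|S| <= vertex_cover_number e.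
Proof.
rewrite /vertex_cover_number; elim/big_ind: _.
- exists setT; last by rewrite cardsT.
  by apply/is_vertex_coverP => x y _; rewrite in_setT.
- move=> m n [S1 cover1 le1] [S2 cover2 le2].
  have [mn | nm] := leqP m n.
    by exists S1 => //; rewrite (minn_idPl mn).
  by exists S2 => //; rewrite (minn_idPr (ltnW nm)).
- by move=> S coverS; exists S.
Qed.

Lemma matching_number_max (M : {set {set T}}) :
  is_matching e M -> #|M| <= matching_number e.
Proof. exact: leq_bigmax_cond. Qed.

Lemma matching_number_attained :
  exists2 M, is_matching e M & matching_number e = #|M|.
Proof.
have matching0 : is_matching e set0.
  by apply/andP; split; apply/forall_inP => f; rewrite in_set0.
exists [arg max_(M > set0 | is_matching e M) #|M|]; first by case: arg_maxnP.
by rewrite /matching_number (bigmax_eq_arg set0).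
Qed.

Lemma matching_le_cover (M : {set {set T}}) (S : {set T}) :
  is_matching e M -> is_vertex_cover e S -> #|M| <= #|S|.
Proof.
move=> /is_matchingP[edgeM disjM] /is_vertex_coverP coverS.
pose pick_cover (f : {set T}) := [pick v in f :&: S].
have pick_coverP f : f \in M -> exists2 v, pick_cover f = Some v & v \in f :&: S.
  move=> fM; rewrite /pick_cover; case: pickP => [v vfS | none]; first by exists v.
  have /is_edgeP[x [y [exy ef]]] := edgeM f fM.
  case/orP: (coverS x y exy) => [xS | yS].
    by move: (none x); rewrite ef !inE eqxx xS.
  by move: (none y); rewrite ef !inE eqxx yS orbT.
have pick_inj : {in M &, injective pick_cover}.
  move=> f g fM gM pick_fg; apply/eqP; apply: contraT => nfg.
  have [v pick_f /setIP[vf _]] := pick_coverP f fM.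
  have [w pick_g /setIP[wg _]] := pick_coverP g gM.
  move: pick_g; rewrite -pick_fg pick_f => -[vw].
  by move/disjointFr: (disjM f g fM gM nfg) => /(_ v vf); rewrite vw wg.
rewrite -(card_in_imset pick_inj) -(card_imset S (@Some_inj _)).
apply/subset_leq_card/subsetP => _ /imsetP[f fM ->].
by have [v -> /setIP[_ vS]] := pick_coverP f fM; apply: imset_f.
Qed.

End CoversAndMatchings.

Section Hall.
Variables (T1 T2 : finType).
Implicit Types (N : T1 -> {set T2}) (A X Y : {set T1}) (B : {set T2}).

Definition nbhd N X : {set T2} := \bigcup_(x in X) N x.

Definition hall_condition N A : Prop :=
  forall X, X \subset A -> #|X| <= #|nbhd N X|.

Definition sdr N A (f : T1 -> T2) : Prop :=
  {in A &, injective f} /\ {in A, forall x, f x \in N x}.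

Lemma nbhd1 N x : nbhd N [set x] = N x.
Proof. by rewrite /nbhd big_set1. Qed.

Lemma nbhdU N X Y : nbhd N (X :|: Y) = nbhd N X :|: nbhd N Y.
Proof. exact: bigcup_setU. Qed.

Lemma nbhdD N B X : nbhd (fun x => N x :\: B) X = nbhd N X :\: B.
Proof.
apply/setP => y; apply/bigcupP/setDP => [[x xX /setDP[yN yB]] | [/bigcupP[x xX yN] yB]].
  by split=> //; apply/bigcupP; exists x.
by exists x => //; apply/setDP.
Qed.

Lemma cardsUD B B' : #|B :|: B'| = #|B| + #|B' :\: B|.
Proof. by rewrite -(cardsID B (B :|: B')) setUK setDUl setDv set0U. Qed.

Lemma sdr_glue N B X Y f g :
  sdr N X f -> {in X, forall x, f x \in B} -> sdr (fun x => N x :\: B) Y g ->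
  sdr N (X :|: Y) (fun x => if x \in X then f x else g x).
Proof.
move=> [f_inj fN] fB [g_inj gN].
have gNB y : y \in X :|: Y -> y \notin X -> g y \in N y :\: B.
  by move=> /setUP[-> // | yY] _; apply: gN.
split=> [x y xXY yXY | x xXY] /=; last first.
  by case: ifP => xX; [apply: fN | case/setDP: (gNB x xXY (negbT xX))].
case: ifP => xX; case: ifP => yX.
- exact: f_inj.
- by move=> fg; case/setDP: (gNB y yXY (negbT yX)); rewrite -fg fB.
- by move=> gf; case/setDP: (gNB x xXY (negbT xX)); rewrite gf fB.
- by apply: g_inj; [case/setUP: xXY; rewrite ?xX | case/setUP: yXY; rewrite ?yX].
Qed.

Lemma hall_condition_tight N A X :
  hall_condition N A -> X \subset A -> #|nbhd N X| <= #|X| ->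
  hall_condition (fun x => N x :\: nbhd N X) (A :\: X).
Proof.
move=> hallA sXA tightX Y; rewrite subsetD nbhdD => /andP[sYA disjYX].
have := hallA (X :|: Y); rewrite subUset sXA sYA nbhdU cardsUD => /(_ isT).
rewrite cardsU_disjoint 1?disjoint_sym //; lia.
Qed.

Lemma hall_condition_surplus N A a b :
  a \in A -> (forall X, X \proper A -> X != set0 -> #|X| < #|nbhd N X|) ->
  hall_condition (fun x => N x :\ b) (A :\ a).
Proof.
move=> aA surplusA Y sYAa; rewrite nbhdD.
have [-> | nY0] := eqVneq Y set0; first by rewrite cards0.
have := surplusA Y (sub_proper_trans sYAa (properD1 aA)) nY0.
by rewrite (cardsD1 b (nbhd N Y)); case: (b \in _) => /=; lia.
Qed.

End Hall.

Theorem hall (T1 T2 : finType) (y0 : T2) (N : T1 -> {set T2}) (A : {set T1}) :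
  hall_condition N A -> exists f, sdr N A f.
Proof.
have [n] := ubnP #|A|; elim: n A N => // n IH A N ltAn hallA.
have [-> | [a aA]] := set_0Vmem A.
  by exists (fun=> y0); split=> x; rewrite in_set0.
have [/existsP[X /and3P[ltXA nX0 tightX]] | /existsPn surplusA] :=
  boolP [exists X : {set T1}, [&& X \proper A, X != set0 & #|nbhd N X| <= #|X|]].
  have sXA := proper_sub ltXA.
  have [f [f_inj fN]] : exists f, sdr N X f.
    apply: IH => [|Y sYX]; first by have := proper_card ltXA; lia.
    by apply: hallA; apply: subset_trans sXA.
  have [g sdr_g] : exists g, sdr (fun x => N x :\: nbhd N X) (A :\: X) g.
    apply: IH (hall_condition_tight hallA sXA tightX).
    rewrite -card_gt0 in nX0; rewrite cardsDS //.
    by have := subset_leq_card sXA; lia.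
  exists (fun x => if x \in X then f x else g x).
  have <- : X :|: (A :\: X) = A by rewrite setDE setUIr setUCr setIT (setUidPr sXA).
  apply: sdr_glue (conj f_inj fN) _ sdr_g => x xX.
  by apply/bigcupP; exists x => //; apply: fN.
have {}surplusA (X : {set T1}) : X \proper A -> X != set0 -> #|X| < #|nbhd N X|.
  move=> ltXA nX0; rewrite ltnNge; apply: contra (surplusA X) => tightX.
  by rewrite ltXA nX0.
have /card_gt0P[b bNa] : 0 < #|N a|.
  by have := hallA [set a]; rewrite sub1set aA nbhd1 cards1 => /(_ isT).
have [g sdr_g] : exists g, sdr (fun x => N x :\ b) (A :\ a) g.
  apply: IH (hall_condition_surplus b aA surplusA).
  by rewrite (cardsD1 a A) aA in ltAn.
exists (fun x => if x \in [set a] then b else g x).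
rewrite -(setD1K aA); apply: (sdr_glue _ _ sdr_g) => [|x _]; last exact: set11.
by split=> [x y /set1P -> /set1P -> | x /set1P ->].
Qed.

Definition rel_matching (T1 T2 : finType) (e : T1 -> T2 -> bool) (P : {set T1 * T2}) :=
  [/\ {in P, forall p, e p.1 p.2}, {in P &, injective fst} & {in P &, injective snd}].

Section Konig.
Variables (T1 T2 : finType) (e : T1 -> T2 -> bool).

Let N x := [set y | e x y].

Lemma rel_matching_of_sdrs (A : {set T1}) (B : {set T2}) f g :
  sdr (fun x => N x :\: B) A f -> sdr (fun y => [set x | e x y] :\: A) B g ->
  exists2 P, rel_matching e P & #|P| = #|A| + #|B|.
Proof.
move=> [f_inj fN] [g_inj gN].
have fP x : x \in A -> f x \notin B /\ e x (f x) by move/fN; rewrite !inE => /andP.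
have gP y : y \in B -> g y \notin A /\ e (g y) y by move/gN; rewrite !inE => /andP.
pose P1 := [set (x, f x) | x in A]; pose P2 := [set (g y, y) | y in B].
have disjP : [disjoint P1 & P2].
  apply/pred0P => p /=; apply/andP => -[/imsetP[x xA ->] /imsetP[y yB [xg _]]].
  by case: (gP y yB); rewrite -xg xA.
exists (P1 :|: P2); last first.
  by rewrite cardsU_disjoint // !card_in_imset // => [y y' _ _ [] | x x' _ _ []].
split.
- move=> _ /setUP[/imsetP[x xA ->] | /imsetP[y yB ->]].
    by case: (fP x xA).
  by case: (gP y yB).
- move=> _ _ /setUP[/imsetP[x xA ->] | /imsetP[y yB ->]]
             /setUP[/imsetP[x' xA' ->] | /imsetP[y' yB' ->]] /=
    => [-> // | xg | gx | /g_inj-> //].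
  + by case: (gP y' yB'); rewrite -xg xA.
  + by case: (gP y yB); rewrite gx xA'.
- move=> _ _ /setUP[/imsetP[x xA ->] | /imsetP[y yB ->]]
             /setUP[/imsetP[x' xA' ->] | /imsetP[y' yB' ->]] /=
    => [/f_inj-> // | fy | yf | -> //].
  + by case: (fP x xA); rewrite fy yB'.
  + by case: (fP x' xA'); rewrite -yf yB.
Qed.

(* [excess X] is [#|X| - #|nbhd N X|] up to the constant [#|T2|].  For [X0] of
   maximal excess, Hall's condition holds on [~: X0] away from [nbhd N X0] and
   on [nbhd N X0] towards [X0]; the two systems of representatives form a
   matching as large as the cover [(~: X0, nbhd N X0)]. *)
Let excess (X : {set T1}) := #|X| + #|~: nbhd N X|.
Let X0 := [arg max_(X > set0) excess X].

Let excess_max X : excess X <= excess X0.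
Proof. by rewrite /X0; case: arg_maxnP => // X1 _; apply. Qed.

Lemma hall_condition_outside : hall_condition (fun x => N x :\: nbhd N X0) (~: X0).
Proof.
move=> Y; rewrite -disjoints_subset nbhdD => disjYX0.
have := excess_max (X0 :|: Y).
rewrite /excess nbhdU cardsU_disjoint 1?disjoint_sym //.
have := cardsC (nbhd N X0); have := cardsC (nbhd N X0 :|: nbhd N Y).
rewrite cardsUD; lia.
Qed.

Lemma hall_condition_inside :
  hall_condition (fun y => [set x | e x y] :\: ~: X0) (nbhd N X0).
Proof.
move=> Z sZNX0; set M := nbhd _ Z.
have sMX0 : M \subset X0.
  by apply/subsetP => x /bigcupP[y _]; rewrite !inE negbK => /andP[].
have sNZ : nbhd N (X0 :\: M) \subset nbhd N X0 :\: Z.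
  apply/subsetP => y /bigcupP[x /setDP[xX0 xM] exy]; rewrite inE.
  apply/andP; split; last by apply/bigcupP; exists x.
  apply: contra xM => yZ; apply/bigcupP; exists y => //.
  by move: exy; rewrite !inE negbK xX0.
have := excess_max (X0 :\: M); rewrite /excess cardsDS //.
have := subset_leq_card sNZ; rewrite cardsDS //.
have := cardsC (nbhd N (X0 :\: M)); have := cardsC (nbhd N X0).
have := subset_leq_card sMX0; have := subset_leq_card sZNX0.
lia.
Qed.

Theorem konig (x0 : T1) (y0 : T2) :
  exists (L : {set T1}) (R : {set T2}) P,
    [/\ forall x y, e x y -> (x \in L) || (y \in R), rel_matching e P
       & #|L| + #|R| <= #|P|].
Proof.
have [f sdr_f] := hall y0 hall_condition_outside.
have [g sdr_g] := hall x0 hall_condition_inside.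
have [P matchingP cardP] := rel_matching_of_sdrs sdr_f sdr_g.
exists (~: X0), (nbhd N X0), P; split=> [x y exy | // | ]; last by rewrite cardP.
rewrite inE; case: (boolP (x \in X0)) => //= xX0.
by apply/bigcupP; exists x; rewrite ?inE.
Qed.

End Konig.

Section BipartiteDoubleCover.
Variables (T : finType) (eG : rel T).
Hypothesis eG_sym : symmetric eG.

Notation GxK2 := (direct_prod eG K2).

Lemma rel_matching_prodK2 (P : {set T * T}) :
  rel_matching eG P -> #|P| <= matching_number GxK2.
Proof.
move=> [eP fst_inj snd_inj].
pose lift (p : T * T) := [set (p.1, false); (p.2, true)].
have lift_inj : {in P &, injective lift}.
  move=> p q pP qP lift_pq; apply: fst_inj => //.
  have : (p.1, false) \in lift q by rewrite -lift_pq !inE eqxx.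
  by rewrite !inE !xpair_eqE /= andbF orbF => /andP[/eqP].
rewrite -(card_in_imset lift_inj); apply/matching_number_max/is_matchingP; split.
  move=> _ /imsetP[p pP ->]; apply/is_edgeP; exists (p.1, false), (p.2, true).
  by rewrite /direct_prod /K2 /= eP.
move=> _ _ /imsetP[p pP ->] /imsetP[q qP ->] lift_pq.
have npq : p != q by apply: contraNneq lift_pq => ->.
have n1 : p.1 != q.1 by apply: contraNneq npq => /fst_inj ->.
have n2 : p.2 != q.2 by apply: contraNneq npq => /snd_inj ->.
apply/pred0P => -[x []] /=; rewrite !inE !xpair_eqE ?andbF ?andbT ?orbF ?orFb.
- by apply/negP => /andP[/eqP -> /eqP]; apply/eqP.
- by apply/negP => /andP[/eqP -> /eqP]; apply/eqP.
Qed.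

Lemma vertex_cover_prodK2 (L R : {set T}) :
  (forall x y, eG x y -> (x \in L) || (y \in R)) ->
  vertex_cover_number GxK2 <= #|L| + #|R|.
Proof.
move=> coverLR.
pose S := setX L [set false] :|: setX R [set true].
have memS x c : ((x, c) \in S) = if c then x \in R else x \in L.
  by rewrite !inE; case: c; rewrite ?(andbT, andbF, orbF).
apply: (@leq_trans #|S|).
  apply/vertex_cover_number_min/is_vertex_coverP => -[x c] [y d] /andP[/= exy].
  rewrite /K2 !memS; case: c; case: d => //= _.
    by rewrite orbC; apply: coverLR; rewrite eG_sym.
  exact: coverLR.
by rewrite (leq_trans (leq_card_setU _ _)) // !cardsX !cards1 !muln1.
Qed.

Lemma vertex_cover_number_prodK2 :
  vertex_cover_number GxK2 = matching_number GxK2.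
Proof.
apply/eqP; rewrite eqn_leq; apply/andP; split.
  have [x0 _ | T0] := pickP (@predT T).
    have [L [R [P [coverLR matchingP cardP]]]] := konig eG x0 x0.
    rewrite (leq_trans (vertex_cover_prodK2 coverLR)) //.
    exact: leq_trans cardP (rel_matching_prodK2 matchingP).
  have noedge x y : eG x y -> (x \in set0) || (y \in set0) by have := T0 x.
  by rewrite (leq_trans (vertex_cover_prodK2 noedge)) // cards0.
have [M matchingM ->] := matching_number_attained GxK2.
have [S coverS leS] := vertex_cover_number_attained GxK2.
exact: leq_trans (matching_le_cover matchingM coverS) leS.
Qed.

Hypothesis eG_irr : irreflexive eG.

Definition orientations (M : {set {set T}}) : {set T * T} :=
  [set p | eG p.1 p.2 && ([set p.1; p.2] \in M)].

Lemma matching_edge_unique M x y z :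
  is_matching eG M -> [set x; y] \in M -> [set x; z] \in M -> eG x y -> y = z.
Proof.
move=> /is_matchingP[_ disjM] xyM xzM exy.
have [exyz | nxyz] := eqVneq [set x; y] [set x; z].
  have : y \in [set x; z] by rewrite -exyz !inE eqxx orbT.
  by rewrite !inE => /orP[/eqP yx | /eqP //]; move: exy; rewrite yx eG_irr.
by move/disjointFr: (disjM _ _ xyM xzM nxyz) => /(_ x); rewrite !inE eqxx => /(_ isT).
Qed.

Lemma rel_matching_orientations M :
  is_matching eG M -> rel_matching eG (orientations M).
Proof.
move=> matchingM; split=> [p | [x y] [x' y'] | [x y] [x' y']]; rewrite !inE /=.
- by case/andP.
- move=> /andP[exy xyM] /andP[_ xy'M] /= exx'; rewrite -exx' in xy'M *.
  by rewrite (matching_edge_unique matchingM xyM xy'M exy).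
- move=> /andP[exy xyM] /andP[_ xy'M] /= eyy'; rewrite -eyy' setUC in xy'M *.
  rewrite setUC in xyM.
  by rewrite (matching_edge_unique matchingM xyM xy'M) // eG_sym.
Qed.

Lemma card_orientations M :
  is_matching eG M -> #|orientations M| = 2 * #|M|.
Proof.
move=> matchingM; have [_ fst_inj _] := rel_matching_orientations matchingM.
have /is_matchingP[edgeM disjM] := matchingM.
rewrite -(card_in_imset fst_inj).
have -> : fst @: orientations M = cover M.
  apply/setP => v; apply/imsetP/bigcupP => [[p] | [f fM]].
    by rewrite inE => /andP[_ pM] ->; exists [set p.1; p.2]; rewrite ?inE ?eqxx.
  have /is_edgeP[a [b [eab ef]]] := edgeM f fM; subst f.
  rewrite !inE => /orP[/eqP -> | /eqP ->].
    by exists (a, b); rewrite // inE eab fM.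
  by exists (b, a); rewrite // inE eG_sym eab setUC fM.
have trivM : trivIset M by apply/trivIsetP.
have := leq_card_cover M; rewrite trivM => -[_ /eqP ->].
rewrite (eq_bigr (fun=> 2)) ?sum_nat_const 1?mulnC // => f fM.
have /is_edgeP[a [b [eab ->]]] := edgeM f fM.
by rewrite cards2; case: eqVneq eab => // ->; rewrite eG_irr.
Qed.

Lemma matching_number_prodK2 : 2 * matching_number eG <= matching_number GxK2.
Proof.
have [M matchingM ->] := matching_number_attained eG.
rewrite -card_orientations //.
exact/rel_matching_prodK2/rel_matching_orientations.
Qed.

End BipartiteDoubleCover.

Section ProductWithK2.
Variables (T U : finType) (eG : rel T) (eH : rel U).

(* Collapsing the edge [ab] of H to K2 maps the fibre of a cover of G x H over
   [{a, b}] injectively onto a cover of G x K2. *)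
Lemma vertex_cover_number_prodK2_le_fibre (S : {set T * U}) a b :
  is_vertex_cover (direct_prod eG eH) S -> eH a b -> eH b a -> a != b ->
  vertex_cover_number (direct_prod eG K2) <= #|[set p in S | p.2 \in [set a; b]]|.
Proof.
move=> /is_vertex_coverP coverS eab eba nab.
pose lift (v : T * bool) := (v.1, if v.2 then b else a).
have lift_inj : injective lift.
  move=> [x c] [y d] [-> eq_cd]; congr (_, _).
  by move: eq_cd nab; case: c; case: d => // ->; rewrite eqxx.
apply: (@leq_trans #|lift @^-1: S|).
  apply/vertex_cover_number_min/is_vertex_coverP => -[x c] [y d] /andP[/= exy ncd].
  rewrite !inE; apply: coverS; rewrite /direct_prod /= exy.
  by case: c ncd; case: d.
rewrite -(card_imset _ lift_inj); apply/subset_leq_card/subsetP => _ /imsetP[v vS ->].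
rewrite inE in vS; rewrite !inE vS /=.
by case: (v.2); rewrite eqxx ?orbT.
Qed.

Lemma matching_mul_vertex_cover_prodK2_le : symmetric eH -> irreflexive eH ->
  matching_number eH * vertex_cover_number (direct_prod eG K2)
    <= vertex_cover_number (direct_prod eG eH).
Proof.
move=> eH_sym eH_irr.
have [S coverS leS] := vertex_cover_number_attained (direct_prod eG eH).
have [M /is_matchingP[edgeM disjM] ->] := matching_number_attained eH.
pose fibre (f : {set U}) := [set p in S | p.2 \in f].
apply: leq_trans leS; apply: (@leq_trans (\sum_(f in M) #|fibre f|)).
  rewrite -sum_nat_const; apply: leq_sum => f fM.
  have /is_edgeP[a [b [eab ->]]] := edgeM f fM.
  apply: vertex_cover_number_prodK2_le_fibre => //; first by rewrite eH_sym.
  by apply: contraTneq eab => ->; rewrite eH_irr.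
rewrite -card_bigcup_disjoint => [|f g fM gM nfg].
  apply/subset_leq_card/bigcupsP => f _.
  by apply/subsetP => p; rewrite inE => /andP[].
apply/pred0P => p /=; rewrite !inE.
apply/negP => /andP[/andP[_ pf] /andP[_ pg]].
by move/disjointFr: (disjM f g fM gM nfg) => /(_ _ pf); rewrite pg.
Qed.

End ProductWithK2.

Theorem lemma18 (T U : finType) (eG : rel T) (eH : rel U) :
  simple_graph eG -> simple_graph eH ->
  nontrivial_graph T -> nontrivial_graph U ->
  nonempty_graph eG -> nonempty_graph eH ->
  [/\ matching_number eH * vertex_cover_number (direct_prod eG K2)
        <= vertex_cover_number (direct_prod eG eH),
      matching_number eH * vertex_cover_number (direct_prod eG K2)
        = matching_number eH * matching_number (direct_prod eG K2)
    & 2 * matching_number eG * matching_number eH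
        <= matching_number eH * matching_number (direct_prod eG K2)].
Proof.
move=> [eG_sym eG_irr] [eH_sym eH_irr] _ _ _ _; split.
- exact: matching_mul_vertex_cover_prodK2_le.
- by rewrite vertex_cover_number_prodK2.
- by rewrite mulnC leq_mul2l matching_number_prodK2 ?orbT.
Qed.
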